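(* Let $G$ be a finite group, $m\ge2$, $H$ a normal subgroup of $G$ of exponent $m-1$, and $K$ a normal subgroup of $G$ such that $G=HK$ and $M(G,H,K)$ is trivial. If $d^\wedge_m(H,K)=\frac{2p-1}{p^2}$ for some prime $p$, then $p$ divides $|G|$. If moreover $p$ is the smallest prime divisor of $|G|$, then $|H:C_H(K)|=|K:C_K(H)|=p$, and hence $H\ne K$. In particular, if $d^\wedge_m(H,K)=\frac34$, then $|H:C_H(K)|=|K:C_K(H)|=2$.
   Context: All groups are finite; ${}^g x=gxg^{-1}$, $[x,y]=xyx^{-1}y^{-1}$. For normal subgroups $H,K$ of $G$, $H\wedge K$ is the group generated by symbols $h\wedge k$ ($h\in H,k\in K$) subject to $hh'\wedge k=({}^h h'\wedge {}^h k)(h\wedge k)$, $h\wedge kk'=(h\wedge k)({}^k h\wedge {}^k k')$, $y\wedge y=1$ for $y\in H\cap K$; $M(G,H,K)$ is the kernel of the epimorphism $H\wedge K\to[H,K]$, $h\wedge k\mapsto[h,k]$. $d^\wedge_m(H,K)=|\{(h,k)\in H\times K:h^m\wedge k=1\}|/(|H||K|)$. $C_H(K)=\{h\in H: hk=kh\ \forall k\in K\}$ and $C_K(H)$ analogously. *)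

From Stdlib Require Import ClassicalEpsilon.
From HB Require Import structures.
From mathcomp Require Import all_boot all_order all_algebra all_fingroup all_solvable.
Set Implicit Arguments. Unset Strict Implicit. Unset Printing Implicit Defensive.
Import GRing.Theory.

Local Open Scope group_scope.

Definition pbool (P : Prop) : bool :=
  if excluded_middle_informative P then true else false.

(* Paper's conventions: left conjugation ^g x = g x g^-1 and
   commutator [x,y] = x y x^-1 y^-1 (MathComp uses the right-handed ones). *)
Definition lconj (gT : finGroupType) (g x : gT) : gT := g * x * g^-1.
Definition lcomm (gT : finGroupType) (x y : gT) : gT := x * y * x^-1 * y^-1.

(* An exterior pairing of normal subgroups H, K (of some ambient group)
   into a group L: a map satisfying the defining relations of H /\ K. *)
Definition exterior_pairing (gT L : finGroupType) (H K : {set gT})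
    (f : gT -> gT -> L) : Prop :=
  [/\ (forall h h' k, h \in H -> h' \in H -> k \in K ->
         f (h * h') k = f (lconj h h') (lconj h k) * f h k),
      (forall h k k', h \in H -> k \in K -> k' \in K ->
         f h (k * k') = f h k * f (lconj k h) (lconj k k'))
    & (forall y, y \in H :&: K -> f y y = 1)].

(* Words in the generators h /\ k: each letter is (inverted?, (h, k)). *)
Definition word_on (gT : finGroupType) (H K : {set gT})
    (w : seq (bool * (gT * gT))) : Prop :=
  forall a, a \in w -> (a.2.1 \in H) /\ (a.2.2 \in K).

Definition eval_word (gT L : finGroupType) (f : gT -> gT -> L)
    (w : seq (bool * (gT * gT))) : L :=
  \prod_(a <- w) (if a.1 then (f a.2.1 a.2.2)^-1 else f a.2.1 a.2.2).

(* The word w represents the identity of the nonabelian exterior product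
   H /\ K: it is killed by every exterior pairing (H /\ K is finite when H, K
   are finite, so it suffices to test pairings into finite groups). *)
Definition wedge_trivial (gT : finGroupType) (H K : {set gT})
    (w : seq (bool * (gT * gT))) : Prop :=
  forall (L : finGroupType) (f : gT -> gT -> L),
    exterior_pairing H K f -> eval_word f w = 1.

(* M(G,H,K) = ker (H /\ K -> [H,K], h /\ k |-> [h,k]) is trivial. *)
Definition M_trivial (gT : finGroupType) (G H K : {set gT}) : Prop :=
  forall w, word_on H K w -> eval_word (@lcomm gT) w = 1 -> wedge_trivial H K w.

Definition dwedge (gT : finGroupType) (m : nat) (H K : {set gT}) : rat :=
  (#|[set x in setX H K | pbool (wedge_trivial H K [:: (false, ((x.1 ^+ m)%g, x.2))])]|%:R
    / (#|H| * #|K|)%:R)%R.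

From Stdlib Require Import ClassicalEpsilon.
From HB Require Import structures.
From mathcomp Require Import all_boot all_order all_algebra all_fingroup all_solvable.
From mathcomp Require Import zify.
Set Implicit Arguments. Unset Strict Implicit. Unset Printing Implicit Defensive.
Import GRing.Theory Num.Theory.
Local Open Scope group_scope.

(* Since H has exponent m - 1, h ^+ m = h on H, and the triviality of
   M(G,H,K) makes h /\ k = 1 equivalent to [h,k] = 1; so d^/\_m(H,K) is the
   proportion of commuting pairs in H x K.  Count these by the first
   coordinate: x in C_H(K) commutes with all of K, while for any other x the
   index |K : C_K(x)| is at least p = pdiv |G|.  With a = |H : C_H(K)| this
   gives (2p - 1) a <= p a + p (p - 1), i.e. a <= p; a = 1 is excluded since
   (2p - 1)/p^2 < 1, and a > 1 forces a >= p.  The same holds for K by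
   symmetry, and H = K is impossible because |H : Z(H)| is never prime.
   Finally p does not divide 2p - 1, so p divides |H| |K|. *)

Section CommutingPairs.

Variable gT : finGroupType.
Implicit Types (G X Y : {group gT}) (A B : {set gT}).

Definition commuting_pairs A B : {set gT * gT} :=
  [set u in setX A B | u.2 \in 'C[u.1]].

Lemma mem_commuting_pairs A B x y :
  ((x, y) \in commuting_pairs A B) = [&& x \in A, y \in B & y \in 'C[x]].
Proof. by rewrite [LHS]inE in_setX -andbA. Qed.

Lemma card_commuting_pairs A B :
  #|commuting_pairs A B| = (\sum_(x in A) #|B :&: 'C[x]|)%N.
Proof.
rewrite -sum1_card (eq_bigl (fun u => (u.1 \in A) && (u.2 \in B :&: 'C[u.1]))).
  by rewrite -(pair_big_dep (fun x => x \in A) (fun x y => y \in B :&: 'C[x])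
    (fun _ _ => 1%N)); apply: eq_bigr => x _; rewrite sum1_card.
by move=> [x y]; rewrite mem_commuting_pairs [_ \in B :&: _]inE andbA.
Qed.

Lemma card_commuting_pairsC A B :
  #|commuting_pairs A B| = #|commuting_pairs B A|.
Proof.
rewrite -(card_imset _ (can_inj swap_pairK)); apply: eq_card => -[y x].
apply/imsetP/idP => [[[x' y']] | yx].
  by rewrite mem_commuting_pairs => /and3P[xA yB xy] [-> ->];
    rewrite mem_commuting_pairs yB xA cent1C.
exists (x, y) => //; move: yx; rewrite !mem_commuting_pairs cent1C.
by case/and3P=> -> -> ->.
Qed.

Lemma pdiv_leq_indexg G X Y :
  X \subset G -> ~~ (X \subset Y) -> (pdiv #|G| <= #|X : Y|)%N.
Proof.
move=> sXG nsXY; apply: pdiv_min_dvd; first by rewrite indexg_gt1.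
exact: dvdn_trans (dvdn_indexg X Y) (cardSg sXG).
Qed.

Lemma pdiv_mul_card_cent1_leq G Y x :
  Y \subset G -> x \notin 'C(Y) -> (pdiv #|G| * #|'C_Y[x]| <= #|Y|)%N.
Proof.
move=> sYG xY; rewrite -(Lagrange (subsetIl Y 'C[x])) mulnC leq_mul2l.
apply/orP; right; apply: pdiv_leq_indexg sYG _.
by rewrite subsetI subxx sub_cent1.
Qed.

Lemma sum_cent_indicator X Y :
  (\sum_(x in X) (x \in 'C(Y)) = #|'C_X(Y)|)%N.
Proof.
rewrite -sum1_card [RHS](eq_bigl (fun x => (x \in X) && (x \in 'C(Y)))) => [|x]; last first.
  by rewrite inE.
by rewrite big_mkcondr; apply: eq_bigr => x _; case: (x \in 'C(Y)).
Qed.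

Lemma card_commuting_pairs_ub G X Y : Y \subset G ->
  (pdiv #|G| * #|commuting_pairs X Y|
     <= #|X| * #|Y| + (pdiv #|G|).-1 * #|Y| * #|'C_X(Y)|)%N.
Proof.
move=> sYG; set p := pdiv #|G|.
rewrite card_commuting_pairs big_distrr -sum_cent_indicator big_distrr.
rewrite -sum_nat_const -big_split leq_sum // => x _ /=.
case: (boolP (x \in 'C(Y))) => [cYx | ncYx]; last first.
  by rewrite muln0 addn0 pdiv_mul_card_cent1_leq.
have /setIidPl -> : Y \subset 'C[x] by rewrite sub_cent1.
by rewrite muln1 -mulSn prednK // pdiv_gt0.
Qed.

Lemma card_commuting_pairs_lb X Y :
  (#|'C_X(Y)| * #|Y| <= #|commuting_pairs X Y|)%N.
Proof.
rewrite card_commuting_pairs (bigID (mem 'C(Y))) /=.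
apply: leq_trans (leq_addr _ _); rewrite -sum_nat_const.
rewrite (eq_bigl (fun x => (x \in X) && (x \in 'C(Y)))); last by move=> x; rewrite inE.
apply: eq_leq; apply: eq_bigr => x /andP[_ cYx].
by have /setIidPl -> : Y \subset 'C[x] by rewrite sub_cent1.
Qed.

End CommutingPairs.

Lemma commuting_count_index_bounds p a c N : (1 < p)%N -> (0 < c)%N ->
  (N * p ^ 2 = p.*2.-1 * (c * a))%N ->
  (p * N <= c * a + p.-1 * c)%N -> (c <= N)%N -> (1 < a <= p)%N.
Proof.
move=> p1 c0 E U L; apply/andP; split; first by case: a E U => [|[|a]] // E; nia.
have : (p.*2.-1 * (c * a) <= p * (c * a + p.-1 * c))%N by rewrite -E; nia.
have -> : p.*2.-1 = (p + p.-1)%N by lia.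
rewrite mulnDl mulnDr leq_add2l.
have -> : (p * (p.-1 * c) = p.-1 * c * p)%N by rewrite mulnC.
by rewrite mulnA leq_pmul2l // muln_gt0 c0 andbT; lia.
Qed.

Lemma indexg_cent_commuting_count (gT : finGroupType) (G X Y : {group gT}) p :
  X \subset G -> Y \subset G -> (1 < p)%N -> pdiv #|G| = p ->
  (#|commuting_pairs X Y| * p ^ 2 = p.*2.-1 * (#|X| * #|Y|))%N ->
  #|X : 'C_X(Y)| = p.
Proof.
move=> sXG sYG p1 pG E.
have LX : (#|'C_X(Y)| * #|X : 'C_X(Y)| = #|X|)%N := Lagrange (subsetIl X 'C(Y)).
have c0 : (0 < #|'C_X(Y)| * #|Y|)%N by rewrite muln_gt0 !cardG_gt0.
have /andP[a1 ap] : (1 < #|X : 'C_X(Y)| <= p)%N.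
  apply: (commuting_count_index_bounds p1 c0); last exact: card_commuting_pairs_lb.
    by rewrite E -LX mulnAC.
  rewrite -{1}pG; apply: leq_trans (card_commuting_pairs_ub X sYG) _; by rewrite pG -LX; nia.
apply/eqP; rewrite eqn_leq ap -pG pdiv_leq_indexg //.
by rewrite -indexg_gt1.
Qed.

Lemma center_index_not_prime (gT : finGroupType) (H : {group gT}) :
  ~~ prime #|H : 'Z(H)|.
Proof.
apply/negP => pr_iZ.
have /center_idP cHH : abelian H.
  apply: cyclic_center_factor_abelian; apply: prime_cyclic.
  by rewrite card_quotient ?normal_norm ?center_normal.
by move: pr_iZ; rewrite cHH indexgg.
Qed.

Lemma prime_dvd_commuting_count (gT : finGroupType) (G X Y : {group gT}) p :
  X \subset G -> Y \subset G -> prime p ->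
  (#|commuting_pairs X Y| * p ^ 2 = p.*2.-1 * (#|X| * #|Y|))%N ->
  p %| #|G|.
Proof.
move=> sXG sYG pr_p E.
have p_dvd : p %| p.*2.-1 * (#|X| * #|Y|) by rewrite -E dvdn_mull // dvdn_exp.
have p_ndvd : ~~ (p %| p.*2.-1).
  have p_gt1 := prime_gt1 pr_p.
  have -> : p.*2.-1 = (p + p.-1)%N by lia.
  by rewrite dvdn_addr // gtnNdvd //; lia.
rewrite !Euclid_dvdM // (negPf p_ndvd) /= in p_dvd.
by case/orP: p_dvd => [/dvdn_trans-> | /dvdn_trans->] //; apply: cardSg.
Qed.

Lemma indexg_cents_commuting_count (gT : finGroupType) (G H K : {group gT}) p :
  H \subset G -> K \subset G -> prime p -> pdiv #|G| = p ->
  (#|commuting_pairs H K| * p ^ 2 = p.*2.-1 * (#|H| * #|K|))%N ->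
  [/\ #|H : 'C_H(K)| = p, #|K : 'C_K(H)| = p & H :!=: K].
Proof.
move=> sHG sKG pr_p pG E; have p_gt1 := prime_gt1 pr_p.
have iH := indexg_cent_commuting_count sHG sKG p_gt1 pG E.
have iK : #|K : 'C_K(H)| = p.
  apply: indexg_cent_commuting_count sKG sHG p_gt1 pG _.
  by rewrite -card_commuting_pairsC E (mulnC #|K|).
split=> //; apply/eqP => eHK; rewrite -eHK in iH.
by have := center_index_not_prime H; rewrite [#|_ : _|]iH pr_p.
Qed.

Section ExteriorSquare.

Variable gT : finGroupType.

Lemma lcomm1P (x y : gT) : reflect (lcomm x y = 1) (y \in 'C[x]).
Proof.
rewrite /lcomm -mulgA -invMg; apply: (iffP cent1P) => [-> | /eqP].
  by rewrite mulgV.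
by rewrite -eq_mulgV1 => /eqP.
Qed.

Lemma lcomm_exterior_pairing (H K : {set gT}) : exterior_pairing H K (@lcomm gT).
Proof.
rewrite /lcomm /lconj; split=> [h h' k _ _ _ | h k k' _ _ _ | y _]; last by rewrite mulgK mulgV.
  by rewrite !invMg !invgK !mulgA !(mulgKV, mulgK).
by rewrite !invMg !invgK !mulgA !(mulgKV, mulgK).
Qed.

Lemma pboolP (P : Prop) : reflect P (pbool P).
Proof. by rewrite /pbool; case: excluded_middle_informative => /= HP; constructor. Qed.

Lemma wedge_trivial1P (G H K : {group gT}) h k :
  M_trivial G H K -> h \in H -> k \in K ->
  reflect (wedge_trivial H K [:: (false, (h, k))]) (k \in 'C[h]).
Proof.
move=> MT hH kK; have eval1 f : eval_word f [:: (false, (h, k))] = f h k.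
  by rewrite /eval_word big_seq1.
apply: (iffP idP) => [cHk | W].
  apply: MT; first by move=> a; rewrite inE => /eqP ->.
  by rewrite eval1; apply/lcomm1P.
by apply/lcomm1P; rewrite -eval1; apply: W (lcomm_exterior_pairing H K).
Qed.

Lemma expg_exponentS (H : {group gT}) h : h \in H -> h ^+ (exponent H).+1 = h.
Proof. by move=> hH; rewrite expgSr expg_exponent // mul1g. Qed.

Lemma dwedge_commuting_pairs (G H K : {group gT}) m :
  M_trivial G H K -> {in H, forall h, h ^+ m = h} ->
  dwedge m H K = (#|commuting_pairs H K|%:R / (#|H| * #|K|)%:R)%R.
Proof.
move=> MT hm; rewrite /dwedge; congr (_%:R / _)%R; apply: eq_card => -[h k].
rewrite [_ \in _]inE in_setX mem_commuting_pairs /=.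
case hH: (h \in H); case kK: (k \in K) => //=.
by rewrite hm //; apply: sameP (pboolP _) (wedge_trivial1P MT hH kK).
Qed.

End ExteriorSquare.

Lemma commuting_count_of_dwedge (gT : finGroupType) (G H K : {group gT}) m a b :
  M_trivial G H K -> {in H, forall h, h ^+ m = h} -> (0 < b)%N ->
  dwedge m H K = (a%:R / b%:R)%R ->
  (#|commuting_pairs H K| * b = a * (#|H| * #|K|))%N.
Proof.
move=> MT hm b_gt0; rewrite (dwedge_commuting_pairs MT hm) => /eqP.
rewrite eqr_div ?pnatr_eq0 -?lt0n ?muln_gt0 ?cardG_gt0 //.
by rewrite -!natrM eqr_nat => /eqP.
Qed.

Theorem mainTheorem11 (gT : finGroupType) (G H K : {group gT}) (m : nat) :
  (2 <= m)%N -> H <| G -> K <| G -> exponent H = m.-1 ->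
  (H * K)%g = G -> M_trivial G H K ->
  (forall p : nat, prime p ->
     dwedge m H K = ((p.*2.-1)%:R / (p ^ 2)%:R)%R ->
     p %| #|G| /\
     (pdiv #|G| = p ->
        [/\ #|H : 'C_H(K)| = p, #|K : 'C_K(H)| = p & H :!=: K]))
  /\
  (dwedge m H K = (3%:R / 4%:R)%R ->
     #|H : 'C_H(K)| = 2 /\ #|K : 'C_K(H)| = 2).
Proof.
move=> m2 nHG nKG eH _ MT.
have [sHG sKG] := (normal_sub nHG, normal_sub nKG).
have hm : {in H, forall h, h ^+ m = h}.
  by move=> h hH; rewrite -(ltn_predK m2) -eH expg_exponentS.
have main p : prime p -> dwedge m H K = ((p.*2.-1)%:R / (p ^ 2)%:R)%R ->
    p %| #|G| /\ (pdiv #|G| = p ->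
      [/\ #|H : 'C_H(K)| = p, #|K : 'C_K(H)| = p & H :!=: K]).
  move=> pr_p dw.
  have E : (#|commuting_pairs H K| * p ^ 2 = p.*2.-1 * (#|H| * #|K|))%N.
    by apply: commuting_count_of_dwedge MT hm _ dw; rewrite expn_gt0 prime_gt0.
  split=> [|pG]; first exact: prime_dvd_commuting_count sHG sKG pr_p E.
  exact: indexg_cents_commuting_count sHG sKG pr_p pG E.
split=> [|dw34]; first exact: main.
have dw2 : dwedge m H K = ((2.*2.-1)%:R / (2 ^ 2)%:R)%R by rewrite dw34.
have [two_dvdG two_eq] := main 2 isT dw2.
have G_gt1 : (1 < #|G|)%N := dvdn_leq (cardG_gt0 G) two_dvdG.
have pdivG : pdiv #|G| = 2.
  by apply/eqP; rewrite eqn_leq pdiv_min_dvd //= prime_gt1 // pdiv_prime.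
by have [-> -> _] := two_eq pdivG.
Qed.
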